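(* For any $n,s\in\mathbb{N}$ and every real number $x$, $$\sum_{k=0}^{n-1}\frac{(-1)^k x^{2k}}{(2k+1)^s}=\sum_{k=1}^n(-1)^{k-1}\binom{n}{k}\,{}_{s+1}F_s\left(\{\tfrac12\}^{s},1-k;\{\tfrac32\}^{s};-x^2\right).$$
   Context: $\mathbb{N}$ is the set of positive integers; $\{a\}^s$ denotes $a$ repeated $s$ times. ${}_{s+1}F_s(a_1,\ldots,a_{s+1};b_1,\ldots,b_s;x)=\sum_{i\geq 0}\frac{(a_1)_i\cdots(a_{s+1})_i}{(b_1)_i\cdots(b_s)_i}\frac{x^i}{i!}$, with $(a)_0=1$, $(a)_i=a(a+1)\cdots(a+i-1)$ for $i>0$ (a finite sum here since $1-k\leq 0$ is an integer). *)

From mathcomp Require Import all_boot all_order all_algebra.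
Set Implicit Arguments. Unset Strict Implicit. Unset Printing Implicit Defensive.
Import Order.TTheory GRing.Theory Num.Theory.
Local Open Scope ring_scope.

Definition poch {R : ringType} (a : R) (i : nat) : R :=
  \prod_(j < i) (a + j%:R).

Definition hyp_term {R : fieldType} (as_ bs : seq R) (x : R) (i : nat) : R :=
  (\prod_(a <- as_) poch a i) / (\prod_(b <- bs) poch b i) * x ^+ i / (i`!)%:R.

(* Terminating generalized hypergeometric series
   _{p+1}F_p(as_, 1-k; bs; x) for k : nat, k >= 1. Since 1-k is a non-positive
   integer, (1-k)_i = 0 for all i >= k, so the series is exactly the finite sum
   over i = 0..k-1. The terminating upper parameter 1-k is placed last. *)
Definition hypF_term {R : fieldType} (as_ : seq R) (k : nat) (bs : seq R) (x : R) : R :=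
  \sum_(i < k) hyp_term (rcons as_ (1 - k%:R)) bs x i.

(* Since (1 - k)_i = (-1)^i (k-1)!/(k-1-i)! and (1/2)_i / (3/2)_i = 1/(2i+1),
   the k-th hypergeometric polynomial is the binomial transform
   sum_(i < k) C(k-1, i) x^(2i) / (2i+1)^s.  After exchanging the sums, the
   coefficient of x^(2i) / (2i+1)^s is sum_k (-1)^(k-1) C(n, k) C(k-1, i), which
   Pascal's rule reduces to the binomial inversion formula
   sum_j (-1)^j C(n, j) C(j, i) = (-1)^i [n = i]; it equals (-1)^i for i < n. *)

From mathcomp Require Import all_boot all_order all_algebra ring.
Import Order.TTheory GRing.Theory Num.Theory.
Local Open Scope ring_scope.

Section SignedBinomialSums.
Variable R : pzRingType.

Lemma sum_sign_binom_mul n i :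
  \sum_(j < n.+1) (-1) ^+ j *+ ('C(n, j) * 'C(j, i)) = (-1) ^+ i *+ (n == i) :> R.
Proof.
elim: n i => [|n IHn] i; first by rewrite big_ord1 bin0n; case: i.
have -> : \sum_(j < n.+2) (-1) ^+ j *+ ('C(n.+1, j) * 'C(j, i))
    = \sum_(j < n.+1) (-1) ^+ j *+ ('C(n, j) * 'C(j, i))
      - \sum_(j < n.+1) (-1) ^+ j *+ ('C(n, j) * 'C(j.+1, i)) :> R.
  rewrite big_ord_recl.
  under eq_bigr => j _ do rewrite lift0 binS mulnDl mulrnDr.
  rewrite big_split /= addrA; congr (_ + _).
    rewrite [in RHS]big_ord_recl big_ord_recr /= (bin_small (ltnSn n)) mul0n mulr0n addr0.
    by rewrite !bin0; congr (_ + _); apply: eq_bigr => j _; rewrite lift0.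
  by rewrite -sumrN; apply: eq_bigr => j _; rewrite exprS mulN1r mulNrn.
case: i => [|i].
  by rewrite mulr0n; apply/eqP; rewrite subr_eq0; apply/eqP/eq_bigr => j _; rewrite !bin0.
under [X in _ - X]eq_bigr => j _ do rewrite binS mulnDr mulrnDr.
by rewrite big_split /= opprD addrA subrr add0r IHn exprS mulN1r -mulNrn.
Qed.

Lemma sum_sign_binomS_mul n i :
  \sum_(k < n) (-1) ^+ k *+ ('C(n, k.+1) * 'C(k, i)) = (-1) ^+ i *+ (i < n)%N :> R.
Proof.
elim: n => [|n IHn]; first by rewrite big_ord0.
under eq_bigr do rewrite binS mulnDl mulrnDr.
rewrite big_split /= big_ord_recr /= bin_small // mul0n mulr0n addr0.
by rewrite IHn sum_sign_binom_mul -mulrnDr ltnS; case: ltngtP.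
Qed.

Lemma sum_sign_binom_transform n (a : nat -> R) :
  \sum_(1 <= k < n.+1) (-1) ^+ (k - 1) * 'C(n, k)%:R * \sum_(i < k) 'C(k.-1, i)%:R * a i
  = \sum_(i < n) (-1) ^+ i * a i.
Proof.
have widen (k : 'I_n) :
    \sum_(i < k.+1) 'C(k, i)%:R * a i = \sum_(i < n) 'C(k, i)%:R * a i.
  rewrite (big_ord_widen n (fun i => 'C(k, i)%:R * a i) (ltn_ord k)) big_mkcond.
  by apply: eq_bigr => i _; case: ltnP => // k_lt_i; rewrite bin_small // mul0r.
rewrite big_add1 big_mkord /=.
under eq_bigr => k _ do rewrite subn1 /= widen big_distrr.
rewrite exchange_big; apply: eq_bigr => i _ /=.
have := sum_sign_binomS_mul n i; rewrite ltn_ord mulr1n => <-.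
rewrite big_distrl.
by apply: eq_bigr => k _; rewrite /= -[_ *+ (_ * _)]mulr_natr natrM !mulrA.
Qed.

End SignedBinomialSums.

Section Pochhammer.
Variable R : nzRingType.
Implicit Types (a : R) (i k : nat).

Lemma pochSr a i : poch a i.+1 = poch a i * (a + i%:R).
Proof. by rewrite /poch big_ord_recr. Qed.

Lemma pochSl a i : poch a i.+1 = a * poch (a + 1) i.
Proof.
rewrite /poch big_ord_recl addr0; congr (_ * _).
by apply: eq_bigr => j _; rewrite lift0 -natr1 addrA addrAC.
Qed.

Lemma poch_oppn k i : poch (- k%:R) i = (-1) ^+ i * (k ^_ i)%:R :> R.
Proof.
elim: i => [|i IHi]; first by rewrite /poch big_ord0 mul1r.
rewrite pochSr IHi ffactnSr natrM exprSr.
have [le_ik | lt_ki] := leqP i k; last by rewrite ffact_small // !(mul0r, mulr0).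
by rewrite natrB // -mulrA mulN1r -mulrN opprB mulrA addrC.
Qed.

End Pochhammer.

Lemma poch_gt0 (R : numDomainType) (a : R) i : 0 < a -> 0 < poch a i.
Proof. by move=> a_gt0; apply: prodr_gt0 => j _; rewrite ltr_wpDr. Qed.

Lemma poch_divD1 (R : numFieldType) (a : R) i :
  0 < a -> poch a i / poch (a + 1) i = a / (a + i%:R).
Proof.
move=> a_gt0.
have [Pa1_neq0 aDi_neq0] : poch (a + 1) i != 0 /\ a + i%:R != 0.
  by split; apply: lt0r_neq0; [apply: poch_gt0 | ]; rewrite ltr_wpDr.
by apply/eqP; rewrite eqr_div // -pochSr pochSl.
Qed.

Lemma hyp_term_nseq_oppn (R : numFieldType) (a y : R) s k i : 0 < a ->
  hyp_term (rcons (nseq s a) (- k%:R)) (nseq s (a + 1)) (- y) i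
  = 'C(k, i)%:R * y ^+ i * (a / (a + i%:R)) ^+ s.
Proof.
move=> a_gt0; rewrite -(@poch_divD1 R a i a_gt0) expr_div_n.
rewrite /hyp_term big_rcons !big_nseq !iter_mulr_1 poch_oppn -bin_ffact natrM.
have Q_neq0 : poch (a + 1) i ^+ s != 0.
  by rewrite expf_neq0 // lt0r_neq0 // poch_gt0 // ltr_wpDr.
have fact_neq0 : (i`!)%:R != 0 :> R by rewrite pnatr_eq0 -lt0n fact_gt0.
have sign_sqr : (-1) ^+ i * (-1) ^+ i = 1 :> R.
  by rewrite -exprMn mulrNN mulr1 expr1n.
transitivity ((-1) ^+ i * (-1) ^+ i *
  ('C(k, i)%:R * y ^+ i * (poch a i ^+ s / poch (a + 1) i ^+ s))).
  by rewrite (exprNn y) /=; field; apply/andP.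
by rewrite sign_sqr mul1r.
Qed.

Lemma hypF_term_half (R : numFieldType) s k (x : R) :
  hypF_term (nseq s 2%:R^-1) k (nseq s (3%:R / 2%:R)) (- x ^+ 2)
  = \sum_(i < k) 'C(k.-1, i)%:R * (x ^+ (2 * i) / (2 * i + 1)%:R ^+ s).
Proof.
rewrite /hypF_term; case: k => [|k]; first by rewrite !big_ord0.
have -> : 1 - k.+1%:R = - k%:R :> R by rewrite -natr1 opprD addrCA subrr addr0.
have -> : 3%:R / 2%:R = 2%:R^-1 + 1 :> R by field.
apply: eq_bigr => i _; rewrite hyp_term_nseq_oppn ?invr_gt0 ?ltr0n //.
have -> : 2%:R^-1 / (2%:R^-1 + i%:R) = (2 * i + 1)%:R^-1 :> R.
  by field; rewrite -natrM natr1 pnatr_eq0.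
by rewrite exprM exprVn mulrA.
Qed.

Theorem lemma3p3 (R : realFieldType) (n s : nat) (x : R) :
  (0 < n)%N -> (0 < s)%N ->
  \sum_(k < n) (-1) ^+ k * x ^+ (2 * k) / (2 * k + 1)%:R ^+ s
  = \sum_(1 <= k < n.+1)
      (-1) ^+ (k - 1) * 'C(n, k)%:R *
      hypF_term (nseq s (2%:R^-1)) k (nseq s (3%:R / 2%:R)) (- x ^+ 2).
Proof.
(* The identity also holds for n = 0 and s = 0. *)
move=> _ _.
under [RHS]eq_bigr => k _ do rewrite hypF_term_half.
rewrite (sum_sign_binom_transform _ _ (fun i => x ^+ (2 * i) / (2 * i + 1)%:R ^+ s)).
by apply: eq_bigr => k _; rewrite mulrA.
Qed.
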